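(* Let $\mathcal{D}=(\gamma,s_0,(E_i)_{i\in N})$ be a PPD, $i\in N$, and $\omega$ an $\mathrm{LTL}_f$ formula. Then there exists an individual $k$-plan $\pi$ for $i$ such that $i$ does not anticipate AAR for $\omega$ in $\pi$.
   Context: Let $N$ be a finite set of agents, $P$ a finite set of propositional atoms, $S=2^P$ the set of states, and $A$ a finite nonempty set of action names containing a distinguished action $\mathit{skip}$. The language $\mathcal{L}_{PL+}$ is generated by $\phi ::= p \mid do(i,a) \mid \neg\phi \mid \phi\wedge\phi$ ($p\in P$, $i\in N$, $a\in A$). A $k$-history is a pair $H=(H_{st},H_{act})$ with $H_{st}:\{0,\dots,k\}\to S$ and $H_{act}:N\times\{0,\dots,k-1\}\to A$; $H,t\models p$ iff $p\in H_{st}(t)$, $H,t\models do(i,a)$ iff $t<k$ and $H_{act}(i,t)=a$, Boolean connectives as usual. An action theory is a pair $\gamma=(\gamma^+,\gamma^-)$ of functions $N\times A\times P\to\mathcal{L}_{PL+}$ with $\gamma^{+}(i,\mathit{skip},p)=\gamma^{-}(i,\mathit{skip},p)=\bot$. A $k$-history $H$ is $\gamma$-compatible if for every $t<k$, $H_{st}(t+1)=(H_{st}(t)\setminus D_t)\cup U_t$, where $D_t$ is the set of $p$ with $H,t\models\gamma^-(i,H_{act}(i,t),p)$ for some $i$ and $H,t\models\neg\gamma^+(j,H_{act}(j,t),p)$ for all $j$, and $U_t$ is the set of $p$ with $H,t\models\gamma^+(i,H_{act}(i,t),p)$ for some $i$ and $H,t\models\neg\gamma^-(j,H_{act}(j,t),p)$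 for all $j$. A joint $k$-plan for a coalition $J\subseteq N$ is a function $\pi$ assigning to each $i\in J$ a sequence $\pi(i):\{0,\dots,k-1\}\to A$ (an individual plan if $J=\{i\}$). For $J'\subseteq J$, $\pi^{J'}$ is the restriction of $\pi$ to $J'$. A joint $k$-plan $\pi_2$ for $N$ is compatible with a $k$-plan $\pi_1$ for $J$ if $\pi_2^J=\pi_1$. For a state $s$, $H^{\pi,s,\gamma}$ is the unique $\gamma$-compatible $k$-history with $H_{st}(0)=s$ and $H_{act}(i,t)=\pi(i)(t)$. $\mathrm{LTL}_f$ formulas: $\phi::=p\mid do(i,a)\mid\neg\phi\mid\phi\wedge\phi\mid X\phi\mid\phi\,U\,\phi$, with $H,t\models X\phi$ iff $t<k$ and $H,t+1\models\phi$, and $H,t\models\phi_1U\phi_2$ iff there is $t'$ with $t\le t'\le k$, $H,t'\models\phi_2$ and $H,t''\models\phi_1$ for all $t\le t''<t'$; $H\models\phi$ means $H,0\models\phi$. A PPD is $\mathcal{D}=(\gamma,s_0,(E_i)_{i\in N})$ with $\gamma$ an action theory, $s_0\in S$ the initial state, and $E_i\subseteq S$ the set of initial states agent $i$ considers possible. Throughout, a horizon $k$ is fixed and ''joint plan'' means joint $k$-plan for $N$. For $i\in N$, a joint plan $\pi_1$, a state $s$ and an $\mathrm{LTL}_f$ formula $\omega$: $i$ bears Causal Active Responsibility (CAR) for $\omega$ in $(\pi_1,s)$ if $H^{\pi_2,s,\gamma}\models\omega$ for every joint plan $\pi_2$ compatible with $\pi_1^{\{i\}}$, and there is a joint plan $\pi_3$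 with $H^{\pi_3,s,\gamma}\not\models\omega$; $i$ bears Agentive Active Responsibility (AAR) for $\omega$ in $(\pi_1,s)$ if $i$ bears CAR for $\omega$ in $(\pi_1,s)$ and $H^{\pi_2,s',\gamma}\models\omega$ for every joint plan $\pi_2$ compatible with $\pi_1^{\{i\}}$ and every $s'\in E_i$. For an individual $k$-plan $\pi$ of $i$, $i$ anticipates AAR for $\omega$ in $\pi$ if there exist $s_1\in E_i$ and a joint plan $\pi_1$ compatible with $\pi$ such that $i$ bears AAR for $\omega$ in $(\pi_1,s_1)$. *)

From mathcomp Require Import all_boot.
Set Implicit Arguments. Unset Strict Implicit. Unset Printing Implicit Defensive.

Section PPD.
Variables (N P A : finType) (skip : A) (k : nat).

(* States S = 2^P are {set P}. *)

Inductive plf : Type :=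
  | PAtom of P
  | PDo of N & A
  | PNeg of plf
  | PAnd of plf & plf.

Inductive ltlf : Type :=
  | LAtom of P
  | LDo of N & A
  | LNeg of ltlf
  | LAnd of ltlf & ltlf
  | LX of ltlf
  | LU of ltlf & ltlf.

(* A k-history: H_st on times 0..k, H_act on N x {0..k-1}; values outside
   those ranges are irrelevant. *)
Record history := History { hst : nat -> {set P}; hact : N -> nat -> A }.

(* evaluation of a PL+ formula on a state s, action profile f, with flag b
   telling whether t < k (do(i,a) is false at t = k). *)
Fixpoint pleval (s : {set P}) (f : N -> A) (b : bool) (phi : plf) : bool :=
  match phi with
  | PAtom p => p \in s
  | PDo i a => b && (f i == a)
  | PNeg g => ~~ pleval s f b g
  | PAnd g h => pleval s f b g && pleval s f b h
  end.

Definition plsat (H : history) (t : nat) (phi : plf) : bool :=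
  pleval (hst H t) (fun i => hact H i t) (t < k) phi.

Record action_theory := ActionTheory {
  gplus : N -> A -> P -> plf;
  gminus : N -> A -> P -> plf }.

Definition is_action_theory (g : action_theory) : Prop :=
  forall i p s f b, ~~ pleval s f b (gplus g i skip p) /\ ~~ pleval s f b (gminus g i skip p).

Definition Dset (g : action_theory) (s : {set P}) (f : N -> A) (b : bool) : {set P} :=
  [set p | [exists i, pleval s f b (gminus g i (f i) p)] &&
           [forall j, ~~ pleval s f b (gplus g j (f j) p)]].
Definition Uset (g : action_theory) (s : {set P}) (f : N -> A) (b : bool) : {set P} :=
  [set p | [exists i, pleval s f b (gplus g i (f i) p)] &&
           [forall j, ~~ pleval s f b (gminus g j (f j) p)]].

Definition step (g : action_theory) (s : {set P}) (f : N -> A) (b : bool) : {set P} :=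
  (s :\: Dset g s f b) :|: Uset g s f b.

Definition compatible (g : action_theory) (H : history) : Prop :=
  forall t, t < k ->
    hst H t.+1 = step g (hst H t) (fun i => hact H i t) true.

Definition indiv_plan := 'I_k -> A.
Definition joint_plan := N -> indiv_plan.

Definition compat_with (pi2 : joint_plan) (i : N) (pi : indiv_plan) : Prop :=
  forall t, pi2 i t = pi t.

(* actions of a plan, extended by skip outside {0..k-1} (irrelevant) *)
Definition plan_act (pi : joint_plan) (i : N) (t : nat) : A :=
  match @insub nat (fun t => t < k) _ t with
  | Some o => pi i o
  | None => skip
  end.

Fixpoint plan_st (g : action_theory) (pi : joint_plan) (s : {set P}) (t : nat) : {set P} :=
  match t with
  | 0 => s
  | t'.+1 => step g (plan_st g pi s t') (fun i => plan_act pi i t') true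
  end.

(* H^{pi,s,gamma}: the unique gamma-compatible k-history from s following pi *)
Definition planH (g : action_theory) (pi : joint_plan) (s : {set P}) : history :=
  History (plan_st g pi s) (plan_act pi).

Fixpoint lsat (H : history) (t : nat) (w : ltlf) : Prop :=
  match w with
  | LAtom p => p \in hst H t
  | LDo i a => t < k /\ hact H i t = a
  | LNeg w1 => ~ lsat H t w1
  | LAnd w1 w2 => lsat H t w1 /\ lsat H t w2
  | LX w1 => t < k /\ lsat H t.+1 w1
  | LU w1 w2 => exists t', [/\ t <= t' <= k, lsat H t' w2 &
                  forall t'', t <= t'' < t' -> lsat H t'' w1]
  end.

Definition models (H : history) (w : ltlf) : Prop := lsat H 0 w.

Record ppd := PPD {
  gamma : action_theory;
  s0 : {set P};
  E : N -> {set {set P}} }.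

Definition CAR (D : ppd) (i : N) (pi1 : joint_plan) (s : {set P}) (w : ltlf) : Prop :=
  (forall pi2 : joint_plan, compat_with pi2 i (pi1 i) -> models (planH (gamma D) pi2 s) w) /\
  (exists pi3 : joint_plan, ~ models (planH (gamma D) pi3 s) w).

Definition AAR (D : ppd) (i : N) (pi1 : joint_plan) (s : {set P}) (w : ltlf) : Prop :=
  CAR D i pi1 s w /\
  (forall pi2 : joint_plan, compat_with pi2 i (pi1 i) ->
     forall s', s' \in E D i -> models (planH (gamma D) pi2 s') w).

Definition anticipates_AAR (D : ppd) (i : N) (pi : indiv_plan) (w : ltlf) : Prop :=
  exists s1, s1 \in E D i /\
    exists pi1 : joint_plan, compat_with pi1 i pi /\ AAR D i pi1 s1 w.

End PPD.

From mathcomp Require Import all_boot.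
From Stdlib Require Import Classical.
Set Implicit Arguments. Unset Strict Implicit. Unset Printing Implicit Defensive.

(* The proof is a classical case distinction on whether w is "epistemically
   valid" for agent i, i.e. holds along the history of every joint plan from
   every initial state that i considers possible.
   - If w is not epistemically valid, a joint plan pi3 falsifying w from some
     state of E_i is fixed, and i's part of pi3 is the desired plan: AAR would
     require w to hold for every joint plan compatible with it, pi3 included.
   - If w is epistemically valid, any plan does: anticipating AAR needs a
     state s1 of E_i at which w can fail (the counterfactual clause of causal
     responsibility), which validity excludes. *)

Section NoAnticipatedAAR.
Variables (N P A : finType) (skip : A) (k : nat).
Variables (D : ppd N P A) (i : N) (w : ltlf N P A).

Definition epistemically_valid : Prop :=
  forall (pi : joint_plan N A k) (s : {set P}), s \in E D i ->
    models k (planH skip (gamma D) pi s) w.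

Lemma no_anticipation_of_counterexample (pi3 : joint_plan N A k) (s : {set P}) :
  s \in E D i -> ~ models k (planH skip (gamma D) pi3 s) w ->
  ~ anticipates_AAR skip D i (pi3 i) w.
Proof.
move=> Es fail [s1 [_ [pi1 [compat1 [_ epistemic]]]]].
apply: fail; apply: epistemic Es => t.
by rewrite compat1.
Qed.

Lemma no_anticipation_of_valid (pi : indiv_plan A k) :
  epistemically_valid -> ~ anticipates_AAR skip D i pi w.
Proof.
move=> valid [s1 [Es1 [pi1 [_ [[_ [pi3 fail]] _]]]]].
exact: fail (valid pi3 s1 Es1).
Qed.

End NoAnticipatedAAR.

Theorem theorem3 (N P A : finType) (skip : A) (k : nat)
  (D : ppd N P A) (i : N) (w : ltlf N P A) :
  is_action_theory skip (gamma D) ->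
  exists pi : indiv_plan A k, ~ anticipates_AAR skip D i pi w.
Proof.
move=> _.
have [valid | not_valid] := classic (epistemically_valid skip k D i w).
- exists (fun _ => skip).
  exact: no_anticipation_of_valid.
- have [pi3 [s [Es fail]]] : exists (pi3 : joint_plan N A k) (s : {set P}),
      s \in E D i /\ ~ models k (planH skip (gamma D) pi3 s) w.
    apply: NNPP => no_counterexample; apply: not_valid => pi3 s Es.
    apply: NNPP => fail; apply: no_counterexample.
    by exists pi3, s.
  exists (pi3 i).
  exact: no_anticipation_of_counterexample Es fail.
Qed.
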